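(* Let $G$ be the disjointness graph of a finite family of $2$-way infinite $3$-monotone chains in the plane. Then $\chi(G)\le\omega(G)^3+\omega(G)$.
   Context: A curve is $x$-monotone if every vertical line meets it in at most one point. A $2$-way infinite $k$-monotone chain is a (possibly self-intersecting) continuous curve in the plane that is the union of $k$ consecutive pieces, each $x$-monotone, consecutive pieces sharing an endpoint, such that the first and last pieces are unbounded and have unbounded projections to the $x$-axis. The disjointness graph of a family of subsets of the plane has the members as vertices, two adjacent if and only if they are disjoint. $\chi(G)$ and $\omega(G)$ denote the chromatic number and clique number of $G$. *)

From Stdlib Require Import Reals ClassicalEpsilon.
From mathcomp Require Import all_boot.
Set Implicit Arguments. Unset Strict Implicit. Unset Printing Implicit Defensive.

Local Open Scope R_scope.

Definition point := (R * R)%type.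
Definition region := point -> Prop.

(** x-coordinate injective on a parameter set: the image of the piece meets
    every vertical line in at most one point (x-monotone piece). *)
Definition x_injective_on (cx : R -> R) (D : R -> Prop) : Prop :=
  forall s t, D s -> D t -> cx s = cx t -> s = t.

(** A 2-way infinite 3-monotone chain: the image of a continuous curve
    gamma = (cx, cy) : R -> R^2, split at parameters t1 <= t2 into three
    consecutive pieces (-oo,t1], [t1,t2], [t2,+oo), each x-monotone,
    the first and last having unbounded projection to the x-axis. *)
Definition is_2way_3monotone_chain (C : region) : Prop :=
  exists (cx cy : R -> R) (t1 t2 : R),
    continuity cx /\ continuity cy /\ t1 <= t2 /\
    (forall p : point, C p <-> exists t, p = (cx t, cy t)) /\
    x_injective_on cx (fun t => t <= t1) /\
    x_injective_on cx (fun t => t1 <= t <= t2) /\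
    x_injective_on cx (fun t => t2 <= t) /\
    (forall M, exists t, t <= t1 /\ M < Rabs (cx t)) /\
    (forall M, exists t, t2 <= t /\ M < Rabs (cx t)).

Local Close Scope R_scope.

Definition disjoint_regions (A B : region) : Prop := forall p, ~ (A p /\ B p).

Definition disj_adj (I : finType) (C : I -> region) (i j : I) : bool :=
  (i != j) && (if excluded_middle_informative (disjoint_regions (C i) (C j))
               then true else false).

Definition is_clique (I : finType) (adj : rel I) (S : {set I}) : bool :=
  [forall i in S, forall j in S, (i != j) ==> adj i j].

Definition clique_number (I : finType) (adj : rel I) : nat :=
  \max_(S : {set I} | is_clique adj S) #|S|.

Definition colorable (I : finType) (adj : rel I) (k : nat) : bool :=
  [exists f : {ffun I -> 'I_k}, [forall i, forall j, adj i j ==> (f i != f j)]].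

Definition loopless (I : finType) (adj : rel I) : Prop := forall i, ~~ adj i i.

Lemma colorable_card (I : finType) (adj : rel I) :
  loopless adj -> colorable adj #|I|.
Proof.
move=> hl; apply/existsP; exists [ffun i => enum_rank i].
apply/forallP=> i; apply/forallP=> j; apply/implyP=> hij.
rewrite !ffunE; apply/negP=> /eqP/enum_rank_inj eij.
by move: hij; rewrite eij (negbTE (hl j)).
Qed.

Lemma colorable_ex (I : finType) (adj : rel I) :
  exists k, colorable [rel i j | (i != j) && adj i j] k.
Proof.
exists #|I|; apply: colorable_card => i /=; by rewrite eqxx.
Qed.

(** Chromatic number: least k admitting a proper k-colouring. Loops (none
    occur in disj_adj) are ignored. *)
Definition chromatic_number (I : finType) (adj : rel I) : nat :=
  ex_minn (colorable_ex adj).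

(* A 2-way infinite 3-monotone chain is, after reparametrisation, either
   "spanning" (the graph of a continuous function, or a zigzag: a graph folded
   back twice, still unbounded in both directions) or a hairpin (two graphs
   over one ray, joined at its end).

   Spanning chains are ordered by their height far to the left. This order is
   transitive by a parity argument: along a curve that avoids a spanning chain
   Y, the parity of the number of branches of Y above the current point never
   changes, so a chain X disjoint from Y is entirely on the side of Y where it
   starts. Hence two chains starting below and above Y never meet. Disjoint
   spanning chains are comparable, so by Mirsky's theorem colouring by height
   uses at most w colours.

   Two disjoint hairpins with the rays suitably ordered lie one below the
   other, one above the other, or one inside the other; each of these three
   relations is transitive, and colouring a hairpin by its three heights uses
   at most w^3 colours. *)

From Stdlib Require Import Reals Ranalysis5 Lra ClassicalEpsilon Classical Lia.
From mathcomp Require Import all_boot zify.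
Set Implicit Arguments. Unset Strict Implicit.
Local Open Scope R_scope.

Lemma continuity_1lipschitz (f : R -> R) :
  (forall x y, Rabs (f x - f y) <= Rabs (x - y)) -> continuity f.
Proof.
move=> Hf x0 eps He; exists eps; split=> // x [_ Hx].
exact: Rle_lt_trans (Hf x x0) Hx.
Qed.

Lemma continuity_Rmin_r c : continuity (fun x => Rmin x c).
Proof.
apply: continuity_1lipschitz => x y; rewrite /Rmin.
by destruct (Rle_dec x c), (Rle_dec y c); unfold Rabs; repeat destruct Rcase_abs; lra.
Qed.

Lemma continuity_Rmax_r c : continuity (fun x => Rmax x c).
Proof.
apply: continuity_1lipschitz => x y; rewrite /Rmax.
by destruct (Rle_dec x c), (Rle_dec y c); unfold Rabs; repeat destruct Rcase_abs; lra.
Qed.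

Lemma IVT_between f a b y : continuity f -> a <= b ->
  f a <= y <= f b \/ f b <= y <= f a -> exists c, a <= c <= b /\ f c = y.
Proof.
move=> Hf Hab Hy; case: (Req_dec a b) => [Eab|Hne].
  subst b.
  by exists a; split; [lra|case: Hy; lra].
have Hlt : a < b by lra.
case: Hy => Hy.
  by case: (f_interv_is_interv f a b y Hlt Hy (fun x _ => Hf x)) => c; exists c.
have Hcont : forall x, a <= x <= b -> continuity_pt (fun x => - f x) x.
  by move=> x _; reg.
have Hy' : - f a <= - y <= - f b by lra.
case: (f_interv_is_interv (fun x => - f x) a b (- y) Hlt Hy' Hcont) => c [Hc Hfc].
by exists c; split => //; lra.
Qed.

Lemma no_crossing_lt f g a b : continuity f -> continuity g ->
  (forall x, Rmin a b <= x <= Rmax a b -> f x <> g x) -> f a < g a -> f b < g b.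
Proof.
move=> Hf Hg Hne Ha; apply: Rnot_le_lt => Hb.
have Hgf : continuity (fun x => g x - f x) by reg.
have [c [Hc Hc0]] : exists c, Rmin a b <= c <= Rmax a b /\ g c - f c = 0.
  rewrite /Rmin /Rmax; case: Rle_dec => Hab.
    by apply: IVT_between Hgf Hab _; lra.
  by apply: IVT_between Hgf _ _; lra.
by apply: (Hne c Hc); lra.
Qed.

Lemma no_crossing_ltE f g a b : continuity f -> continuity g ->
  (forall x, Rmin a b <= x <= Rmax a b -> f x <> g x) -> (f a < g a <-> f b < g b).
Proof.
move=> Hf Hg Hne; split; first exact: no_crossing_lt.
apply: no_crossing_lt => // x Hx; apply: Hne.
by rewrite Rmin_comm Rmax_comm.
Qed.

Definition convex (S : R -> Prop) := forall x y z, S x -> S z -> x <= y <= z -> S y.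

Lemma convex_lerp S x z l : convex S -> S x -> S z -> 0 <= l <= 1 ->
  S ((z - x) * l + x).
Proof.
move=> HS Hx Hz Hl; case: (Rle_dec x z) => Hxz.
  by apply: (HS x _ z) => //; nra.
by apply: (HS z _ x) => //; nra.
Qed.

(** Along the segment from (x, y) to (s0, u0) in S x S one has s < t, so
    phi t - phi s never vanishes and keeps its sign. *)
Lemma injective_continuous_increasing (phi : R -> R) (S : R -> Prop) s0 u0 :
  continuity phi -> convex S ->
  (forall s t, S s -> S t -> phi s = phi t -> s = t) ->
  S s0 -> S u0 -> s0 < u0 -> phi s0 < phi u0 ->
  forall x y, S x -> S y -> x < y -> phi x < phi y.
Proof.
move=> Hphi HS Hinj Hs0 Hu0 Hsu Hpsu x y Hx Hy Hxy.
pose g l := phi ((u0 - y) * l + y) - phi ((s0 - x) * l + x).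
have Hg : continuity g by rewrite /g; reg.
have E1 : forall a b, (a - b) * 1 + b = a by move=> a b; ring.
have E0 : forall a b, (a - b) * 0 + b = b by move=> a b; ring.
have Hg1 : 0 < g 1 by rewrite /g !E1; lra.
suff : (fun _ => 0) 0 < g 0 by rewrite /g !E0 /=; lra.
apply: (@no_crossing_lt (fun _ => 0) g 1 0) Hg _ Hg1; first by reg.
move=> l Hl Heq; rewrite Rmin_right ?Rmax_left in Hl; try lra.
have Hp := @convex_lerp S x s0 l HS Hx Hs0 Hl.
have Hq := @convex_lerp S y u0 l HS Hy Hu0 Hl.
have Hpos : 0 < (u0 - s0) * l + (y - x) * (1 - l).
  have : 0 <= (y - x) * (1 - l) by apply: Rmult_le_pos; lra.
  case: (Req_dec l 0) => [->|Hl0]; first lra.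
  have : 0 < (u0 - s0) * l by apply: Rmult_lt_0_compat; lra.
  lra.
have Hpq : (s0 - x) * l + x < (u0 - y) * l + y.
  have : (u0 - y) * l + y - ((s0 - x) * l + x) = (u0 - s0) * l + (y - x) * (1 - l)
    by ring.
  lra.
rewrite /g /= in Heq; have := Hinj _ _ Hq Hp; lra.
Qed.

Section NondecreasingIVP.

Variable psi : R -> R.
Hypothesis psi_nondecreasing : forall x y, x <= y -> psi x <= psi y.
Hypothesis psi_IVP : forall x y t, psi x <= t <= psi y -> exists z, psi z = t.

Lemma nondecreasing_IVP_left_bound x0 e : 0 < e ->
  exists d, 0 < d /\ forall x, x0 - d < x -> psi x0 - e <= psi x.
Proof.
move=> He; case: (classic (exists x, psi x <= psi x0 - e)) => [[x Hx]|Hn].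
  have [z Hz] : exists z, psi z = psi x0 - e.
    by apply: (psi_IVP (x := x) (y := x0)); lra.
  have Hzx : z < x0.
    by apply: Rnot_le_lt => Hc; have := psi_nondecreasing Hc; lra.
  exists (x0 - z); split => [|y Hy]; first lra.
  by rewrite -Hz; apply: psi_nondecreasing; lra.
exists 1; split => [|y _]; first lra.
by apply: Rnot_lt_le => Hc; apply: Hn; exists y; lra.
Qed.

End NondecreasingIVP.

Lemma nondecreasing_IVP_continuity (psi : R -> R) :
  (forall x y, x <= y -> psi x <= psi y) ->
  (forall x y t, psi x <= t <= psi y -> exists z, psi z = t) ->
  continuity psi.
Proof.
move=> Hm Hiv x0 eps He.
have He2 : 0 < eps / 2 by lra.
have [d1 [Hd1 H1]] := nondecreasing_IVP_left_bound Hm Hiv x0 He2.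
pose mirror x := - psi (- x).
have Hmm : forall x y, x <= y -> mirror x <= mirror y.
  by move=> x y Hxy; rewrite /mirror; have := Hm (- y) (- x); lra.
have Hmiv : forall x y t, mirror x <= t <= mirror y -> exists z, mirror z = t.
  move=> x y t Ht; have [|z Hz] := Hiv (- y) (- x) (- t); first by rewrite /mirror in Ht; lra.
  by exists (- z); rewrite /mirror Ropp_involutive Hz Ropp_involutive.
have [d2 [Hd2 H2]] := nondecreasing_IVP_left_bound Hmm Hmiv (- x0) He2.
exists (Rmin d1 d2); split => [|x [_ Hx]]; first exact: Rmin_pos.
have := H1 x; have := H2 (- x); rewrite /mirror !Ropp_involutive.
move: Hx; rewrite /dist /= /R_dist; have := Rmin_l d1 d2; have := Rmin_r d1 d2.
by rewrite /Rabs; do 2 case: Rcase_abs; lra.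
Qed.

(** [cl] clamps the real line onto the image [phi S]; the section [psi] of
    [phi] over [cl] is then nondecreasing with an interval image. *)
Lemma continuous_clamped_inverse (phi cl : R -> R) (S : R -> Prop) :
  convex S ->
  (forall s t, S s -> S t -> s < t -> phi s < phi t) ->
  (forall x, exists t, S t /\ phi t = cl x) ->
  (forall x y, x <= y -> cl x <= cl y) ->
  (forall t, S t -> cl (phi t) = phi t) ->
  exists psi, continuity psi /\ (forall x, S (psi x) /\ phi (psi x) = cl x) /\
     (forall t, S t -> psi (phi t) = t).
Proof.
move=> HS Hinc Hsurj Hcl Hfix.
have [psi Hpsi] : exists psi, forall x, S (psi x) /\ phi (psi x) = cl x.
  exists (fun x => proj1_sig (constructive_indefinite_description _ (Hsurj x))).
  by move=> x; case: constructive_indefinite_description.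
have Hinj : forall s t, S s -> S t -> phi s = phi t -> s = t.
  move=> s t Hs Ht Heq; case: (Rtotal_order s t) => [Hst|[//|Hts]].
    by have := Hinc _ _ Hs Ht Hst; lra.
  by have := Hinc _ _ Ht Hs Hts; lra.
have Hback : forall t, S t -> psi (phi t) = t.
  by move=> t Ht; have [H1 H2] := Hpsi (phi t); apply: Hinj => //; rewrite H2 Hfix.
exists psi; split; last by [].
apply: nondecreasing_IVP_continuity.
  move=> x y Hxy; apply: Rnot_lt_le => Hlt.
  have [Hx1 Hx2] := Hpsi x; have [Hy1 Hy2] := Hpsi y.
  by have := Hinc _ _ Hy1 Hx1 Hlt; have := Hcl _ _ Hxy; lra.
move=> x y t Ht; exists (phi t); apply: Hback.
exact: (HS _ _ _ (proj1 (Hpsi x)) (proj1 (Hpsi y)) Ht).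
Qed.

Lemma increasing_on_left_ray_inverse (phi : R -> R) t1 : continuity phi ->
  (forall s t, s <= t1 -> t <= t1 -> phi s = phi t -> s = t) ->
  phi (t1 - 1) < phi t1 ->
  (forall M, exists t, t <= t1 /\ M < Rabs (phi t)) ->
  exists psi, continuity psi /\
    (forall x, psi x <= t1 /\ phi (psi x) = Rmin x (phi t1)) /\
    (forall t, t <= t1 -> psi (phi t) = t).
Proof.
move=> Hc Hinj Hlt Hunb.
have HS : convex (fun t => t <= t1) by move=> x y z; lra.
have Hinc : forall s t, s <= t1 -> t <= t1 -> s < t -> phi s < phi t.
  move=> s t Hs Ht Hst.
  by apply: (@injective_continuous_increasing phi (fun t => t <= t1) (t1 - 1) t1) => //;
    lra.
have Hle : forall t, t <= t1 -> phi t <= phi t1.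
  move=> t Ht; case: (Req_dec t t1) => [->|Hne]; first lra.
  by have := Hinc t t1 Ht (Rle_refl _); lra.
apply: continuous_clamped_inverse => //.
- move=> x; have Hy : Rmin x (phi t1) <= phi t1 by apply: Rmin_r.
  have [t [Ht HM]] := Hunb (Rabs (Rmin x (phi t1)) + Rabs (phi t1)).
  have H2 : phi t < Rmin x (phi t1).
    move: HM; have := Rle_abs (phi t1); have := Hle t Ht.
    by rewrite /Rabs; do 3 case: Rcase_abs; lra.
  have [|c [Hc1 Hc2]] := IVT_between Hc Ht (y := Rmin x (phi t1)); first lra.
  by exists c; split => //; lra.
- by move=> x y Hxy; rewrite /Rmin; destruct (Rle_dec x (phi t1)), (Rle_dec y (phi t1));
    lra.
- by move=> t Ht; apply: Rmin_left; exact: Hle.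
Qed.

Lemma increasing_on_segment_inverse (phi : R -> R) s1 s2 : s1 < s2 -> continuity phi ->
  (forall s t, s1 <= s <= s2 -> s1 <= t <= s2 -> phi s = phi t -> s = t) ->
  phi s1 < phi s2 ->
  exists psi, continuity psi /\
    (forall x, s1 <= psi x <= s2 /\ phi (psi x) = Rmax (phi s1) (Rmin x (phi s2))) /\
    (forall t, s1 <= t <= s2 -> psi (phi t) = t).
Proof.
move=> Hs Hc Hinj Hlt.
have HS : convex (fun t => s1 <= t <= s2) by move=> x y z; lra.
have Hinc : forall s t, s1 <= s <= s2 -> s1 <= t <= s2 -> s < t -> phi s < phi t.
  move=> s t Hs' Ht Hst.
  by apply: (@injective_continuous_increasing phi (fun t => s1 <= t <= s2) s1 s2) => //;
    lra.
have Hle : forall t, s1 <= t <= s2 -> phi s1 <= phi t <= phi s2.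
  move=> t Ht; split.
    case: (Req_dec t s1) => [->|Hne]; first lra.
    by have := Hinc s1 t (conj (Rle_refl _) (Rlt_le _ _ Hs)) Ht; lra.
  case: (Req_dec t s2) => [->|Hne]; first lra.
  by have := Hinc t s2 Ht (conj (Rlt_le _ _ Hs) (Rle_refl _)); lra.
apply: continuous_clamped_inverse => //.
- move=> x; set y := Rmax (phi s1) (Rmin x (phi s2)).
  have Hy : phi s1 <= y <= phi s2.
    by rewrite /y /Rmax /Rmin; destruct (Rle_dec x (phi s2)), (Rle_dec (phi s1) _); lra.
  have [|c Hcy] := IVT_between Hc (Rlt_le _ _ Hs) (y := y); first lra.
  by exists c.
- move=> x y Hxy; rewrite /Rmax /Rmin.
  by destruct (Rle_dec x (phi s2)), (Rle_dec y (phi s2)), (Rle_dec (phi s1) x),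
    (Rle_dec (phi s1) y), (Rle_dec (phi s1) (phi s2)); lra.
- move=> t Ht; have := Hle t Ht; rewrite /Rmax /Rmin.
  by destruct (Rle_dec (phi t) (phi s2)), (Rle_dec (phi s1) _); lra.
Qed.

Definition ray (rightward : bool) (c x : R) : Prop := if rightward then c <= x else x <= c.
Definition between (c d x : R) : Prop := c <= x <= d \/ d <= x <= c.

Definition piece_graph (cx cy : R -> R) (D X : R -> Prop) (F : R -> R) : Prop :=
  (forall t, D t -> X (cx t) /\ cy t = F (cx t)) /\
  (forall x, X x -> exists t, D t /\ cx t = x).

Lemma left_ray_piece_graph cx cy t1 : continuity cx -> continuity cy ->
  x_injective_on cx (fun t => t <= t1) ->
  (forall M, exists t, t <= t1 /\ M < Rabs (cx t)) ->
  exists d F, continuity F /\ F (cx t1) = cy t1 /\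
    piece_graph cx cy (fun t => t <= t1) (ray d (cx t1)) F.
Proof.
move=> Hx Hy Hinj Hunb.
have Hne : cx (t1 - 1) <> cx t1.
  by move=> Heq; have := Hinj (t1 - 1) t1 ltac:(simpl; lra) ltac:(simpl; lra) Heq; lra.
case: (Rlt_dec (cx (t1 - 1)) (cx t1)) => Hlt.
  have [psi [Hpc [Hp1 Hp2]]] := increasing_on_left_ray_inverse Hx Hinj Hlt Hunb.
  exists false, (fun x => cy (psi x)); split; first by reg.
  split; first by rewrite Hp2 //; lra.
  split => [t Ht|x /= Hxr].
    rewrite Hp2 //; split => //=.
    by have [_] := Hp1 (cx t); rewrite Hp2 // => ->; apply: Rmin_r.
  by exists (psi x); have [H1 H2] := Hp1 x; rewrite H2 Rmin_left.
have Hlt' : - cx (t1 - 1) < - cx t1 by lra.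
have Hinj' : forall s t, s <= t1 -> t <= t1 -> - cx s = - cx t -> s = t.
  by move=> s t Hs Ht Heq; apply: Hinj => //; lra.
have Hunb' : forall M, exists t, t <= t1 /\ M < Rabs (- cx t).
  by move=> M; have [t [Ht HM]] := Hunb M; exists t; rewrite Rabs_Ropp.
have Hcx' : continuity (fun t => - cx t) by reg.
have [psi [Hpc [Hp1 Hp2]]] := increasing_on_left_ray_inverse Hcx' Hinj' Hlt' Hunb'.
exists true, (fun x => cy (psi (- x))); split; first by reg.
split; first by rewrite (Hp2 t1) //; lra.
split => [t Ht|x /= Hxr].
  rewrite (Hp2 t) //; split => //=.
  have [_] := Hp1 (- cx t); rewrite (Hp2 t) // => H.
  by have := Rmin_r (- cx t) (- cx t1); lra.
exists (psi (- x)); have [H1 H2] := Hp1 (- x); split => //.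
by move: H2; rewrite Rmin_left; lra.
Qed.

Lemma right_ray_piece_graph cx cy t2 : continuity cx -> continuity cy ->
  x_injective_on cx (fun t => t2 <= t) ->
  (forall M, exists t, t2 <= t /\ M < Rabs (cx t)) ->
  exists d F, continuity F /\ F (cx t2) = cy t2 /\
    piece_graph cx cy (fun t => t2 <= t) (ray d (cx t2)) F.
Proof.
move=> Hx Hy Hinj Hunb.
have Hinj' : x_injective_on (fun t => cx (- t)) (fun t => t <= - t2).
  move=> s t Hs Ht Heq.
  by have := Hinj (- s) (- t) ltac:(simpl in *; lra) ltac:(simpl in *; lra) Heq; lra.
have Hunb' : forall M, exists t, t <= - t2 /\ M < Rabs (cx (- t)).
  move=> M; have [t [Ht HM]] := Hunb M; exists (- t).
  by rewrite Ropp_involutive; split => //; lra.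
have Hcx' : continuity (fun t => cx (- t)) by reg.
have Hcy' : continuity (fun t => cy (- t)) by reg.
have [d [F [HF [H1 [H2 H3]]]]] := left_ray_piece_graph Hcx' Hcy' Hinj' Hunb'.
move: H1 H2 H3; rewrite /= Ropp_involutive => H1 H2 H3.
exists d, F; do 2 split => //; split => [t Ht|x Hxr].
  by have := H2 (- t) ltac:(lra); rewrite Ropp_involutive.
by have [t [Ht Htx]] := H3 x Hxr; exists (- t); split => //; lra.
Qed.

Lemma segment_piece_graph cx cy s1 s2 : s1 <= s2 -> continuity cx -> continuity cy ->
  x_injective_on cx (fun t => s1 <= t <= s2) ->
  exists F, continuity F /\ F (cx s1) = cy s1 /\ F (cx s2) = cy s2 /\
    piece_graph cx cy (fun t => s1 <= t <= s2) (between (cx s1) (cx s2)) F.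
Proof.
move=> Hs Hx Hy Hinj; case: (Req_dec s1 s2) => [Heq|Hne].
  subst s2; exists (fun _ => cy s1); do 3 (split; first by [reg|]).
  split => [t Ht|x Hb].
    have -> : t = s1 by lra.
    by split => //; rewrite /between; lra.
  by exists s1; split; [lra|rewrite /between in Hb; lra].
have Hlt : s1 < s2 by lra.
have Hne' : cx s1 <> cx s2.
  by move=> Heq; have := Hinj s1 s2 ltac:(simpl; lra) ltac:(simpl; lra) Heq; lra.
case: (Rlt_dec (cx s1) (cx s2)) => Hc.
  have [psi [Hpc [Hp1 Hp2]]] := increasing_on_segment_inverse Hlt Hx Hinj Hc.
  exists (fun x => cy (psi x)); split; first by reg.
  do 2 (split; first by rewrite Hp2 //; lra).
  split => [t Ht|x Hxb].
    rewrite Hp2 //; split => //; have [_] := Hp1 (cx t); rewrite Hp2 // => H; left.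
    by move: H; rewrite /Rmax /Rmin; destruct (Rle_dec (cx t) (cx s2)),
      (Rle_dec (cx s1) _); lra.
  exists (psi x); have [H1 H2] := Hp1 x; split => //; rewrite H2.
  by move: Hxb; rewrite /between /Rmax /Rmin; destruct (Rle_dec x (cx s2)),
    (Rle_dec (cx s1) _); lra.
have Hc' : - cx s1 < - cx s2 by lra.
have Hinj' : forall s t, s1 <= s <= s2 -> s1 <= t <= s2 -> - cx s = - cx t -> s = t.
  by move=> s t Hs' Ht Heq; apply: Hinj => //; lra.
have Hcx' : continuity (fun t => - cx t) by reg.
have [psi [Hpc [Hp1 Hp2]]] := increasing_on_segment_inverse Hlt Hcx' Hinj' Hc'.
exists (fun x => cy (psi (- x))); split; first by reg.
split; first by rewrite (Hp2 s1) //; lra.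
split; first by rewrite (Hp2 s2) //; lra.
split => [t Ht|x Hxb].
  rewrite (Hp2 t) //; split => //; have [_] := Hp1 (- cx t); rewrite (Hp2 t) // => H.
  by right; move: H; rewrite /Rmax /Rmin; destruct (Rle_dec (- cx t) (- cx s2)),
    (Rle_dec (- cx s1) _); lra.
exists (psi (- x)); have [H1 H2] := Hp1 (- x); split => //.
by move: H2 Hxb; rewrite /between /Rmax /Rmin; destruct (Rle_dec (- x) (- cx s2)),
  (Rle_dec (- cx s1) _); lra.
Qed.

Definition three_graphs c1 c2 (d1 d3 : bool) (F1 F2 F3 : R -> R) (p : point) : Prop :=
  (ray d1 c1 p.1 /\ p.2 = F1 p.1) \/ (between c1 c2 p.1 /\ p.2 = F2 p.1) \/
  (ray d3 c2 p.1 /\ p.2 = F3 p.1).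

Lemma chain_three_graphs (Cr : region) : is_2way_3monotone_chain Cr ->
  exists c1 c2 d1 d3 F1 F2 F3, continuity F1 /\ continuity F2 /\ continuity F3 /\
    F1 c1 = F2 c1 /\ F2 c2 = F3 c2 /\
    forall p, Cr p <-> three_graphs c1 c2 d1 d3 F1 F2 F3 p.
Proof.
case=> cx [cy [t1 [t2 [Hx [Hy [H12 [HC [Hi1 [Hi2 [Hi3 [Hu1 Hu3]]]]]]]]]]].
have [d1 [F1 [HF1 [E1 [P1 S1]]]]] := left_ray_piece_graph Hx Hy Hi1 Hu1.
have [F2 [HF2 [E2 [E2' [P2 S2]]]]] := segment_piece_graph H12 Hx Hy Hi2.
have [d3 [F3 [HF3 [E3 [P3 S3]]]]] := right_ray_piece_graph Hx Hy Hi3 Hu3.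
exists (cx t1), (cx t2), d1, d3, F1, F2, F3.
do 3 split => //; split; first by rewrite E1 E2.
split; first by rewrite E2' E3.
move=> [x y]; rewrite HC /three_graphs /=; split.
  case=> t [-> ->]; case: (Rle_dec t t1) => Ht1.
    by left; have [Hr ->] := P1 t Ht1.
  case: (Rle_dec t t2) => Ht2.
    by right; left; have [Hr ->] := P2 t ltac:(lra).
  by right; right; have [Hr ->] := P3 t ltac:(lra).
case=> [[Hr ->]|[[Hr ->]|[Hr ->]]].
- by have [t [Ht <-]] := S1 x Hr; exists t; have [_ <-] := P1 t Ht.
- by have [t [Ht <-]] := S2 x Hr; exists t; have [_ <-] := P2 t Ht.
- by have [t [Ht <-]] := S3 x Hr; exists t; have [_ <-] := P3 t Ht.
Qed.

(** A hairpin: two graphs [hp_u], [hp_v] over the ray [hp_dom] that meet at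
    its end [hp_end]. *)
Record hairpin := MkHairpin { hp_right : bool; hp_end : R; hp_u : R -> R; hp_v : R -> R }.

Definition hp_dom (H : hairpin) : R -> Prop := ray (hp_right H) (hp_end H).

Definition hairpin_wf (H : hairpin) : Prop :=
  continuity (hp_u H) /\ continuity (hp_v H) /\ hp_u H (hp_end H) = hp_v H (hp_end H).

Definition on_hairpin (H : hairpin) (p : point) : Prop :=
  hp_dom H p.1 /\ (p.2 = hp_u H p.1 \/ p.2 = hp_v H p.1).

(** Up to reparametrisation a chain is the graph of one function, a zigzag
    (graphs over (-oo, a], [b, a] and [b, +oo) with b < a, glued at x = a and
    x = b), or a hairpin. *)
Inductive shape : Type :=
| Graph (h : R -> R)
| Zigzag (a b : R) (g1 g2 g3 : R -> R)
| Hairpin (H : hairpin).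

Definition shape_wf (s : shape) : Prop :=
  match s with
  | Graph h => continuity h
  | Zigzag a b g1 g2 g3 => continuity g1 /\ continuity g2 /\ continuity g3 /\ b < a /\
                           g1 a = g2 a /\ g2 b = g3 b
  | Hairpin H => hairpin_wf H
  end.

Definition on_shape (s : shape) (p : point) : Prop :=
  match s with
  | Graph h => p.2 = h p.1
  | Zigzag a b g1 g2 g3 => (p.1 <= a /\ p.2 = g1 p.1) \/
                           (b <= p.1 <= a /\ p.2 = g2 p.1) \/ (b <= p.1 /\ p.2 = g3 p.1)
  | Hairpin H => on_hairpin H p
  end.

Definition glue (f1 f2 : R -> R) c x := f1 (Rmin x c) + f2 (Rmax x c) - f1 c.

Lemma continuity_glue f1 f2 c : continuity f1 -> continuity f2 ->
  continuity (glue f1 f2 c).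
Proof.
move=> H1 H2; pose m x := Rmin x c; pose M x := Rmax x c.
have Hm : continuity m := continuity_Rmin_r c.
have HM : continuity M := continuity_Rmax_r c.
by change (continuity (fun x => f1 (m x) + f2 (M x) - f1 c)); reg.
Qed.

Lemma glue_l f1 f2 c x : f1 c = f2 c -> x <= c -> glue f1 f2 c x = f1 x.
Proof. by move=> E H; rewrite /glue Rmin_left // Rmax_right //; lra. Qed.

Lemma glue_r f1 f2 c x : f1 c = f2 c -> c <= x -> glue f1 f2 c x = f2 x.
Proof. by move=> E H; rewrite /glue Rmin_right // Rmax_left //; lra. Qed.

Section ThreeGraphs.

Variables (c1 c2 : R) (F1 F2 F3 : R -> R).
Hypotheses (HF1 : continuity F1) (HF2 : continuity F2) (HF3 : continuity F3).
Hypotheses (E1 : F1 c1 = F2 c1) (E2 : F2 c2 = F3 c2).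

Lemma three_graphs_opposite_shape : exists s, shape_wf s /\
  forall p, three_graphs c1 c2 false true F1 F2 F3 p <-> on_shape s p.
Proof.
case: (Rle_dec c1 c2) => Hc; last first.
  exists (Zigzag c1 c2 F1 F2 F3); split; first by do 4 split => //; lra.
  move=> [x y]; rewrite /three_graphs /on_shape /ray /between /=.
  have -> : (c1 <= x <= c2 \/ c2 <= x <= c1) <-> c2 <= x <= c1 by split; [case; lra|right].
  by [].
pose G := glue F2 F3 c2.
have EG : F1 c1 = G c1 by rewrite /G glue_l.
exists (Graph (glue F1 G c1)); split; first by apply: continuity_glue => //;
  apply: continuity_glue.
move=> [x y]; rewrite /three_graphs /on_shape /ray /between /=; split.
  case=> [[Hr ->]|[[Hr ->]|[Hr ->]]]; first by rewrite glue_l.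
    by rewrite (glue_r (x := x) EG) /G ?glue_l //; case: Hr; lra.
  by rewrite (glue_r (x := x) EG) /G ?glue_r //; lra.
move=> ->; case: (Rle_dec x c1) => Hx1; first by left; rewrite glue_l.
rewrite (glue_r (x := x) EG); last lra.
case: (Rle_dec x c2) => Hx2.
  by right; left; split; [lra|rewrite /G glue_l].
by right; right; split; [lra|rewrite /G glue_r //; lra].
Qed.

Lemma three_graphs_parallel_shape d : c1 <= c2 -> exists s, shape_wf s /\
  forall p, three_graphs c1 c2 d d F1 F2 F3 p <-> on_shape s p.
Proof.
move=> Hc; case: d.
  pose G := glue F2 F3 c2.
  exists (Hairpin (MkHairpin true c1 F1 G)); split; first by rewrite /shape_wf /hairpin_wf /=; do 2 split => //;
    [exact: continuity_glue|rewrite /G glue_l].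
  move=> [x y]; rewrite /three_graphs /on_shape /on_hairpin /hp_dom /ray /between /=.
  split.
    case=> [[Hr ->]|[[Hr ->]|[Hr ->]]]; first by split => //; left.
      by split; [case: Hr; lra|right; rewrite /G glue_l //; case: Hr; lra].
    by split; [lra|right; rewrite /G glue_r //; lra].
  case=> Hr [->|->]; first by left.
  case: (Rle_dec x c2) => Hx2.
    by right; left; split; [lra|rewrite /G glue_l].
  by right; right; split; [lra|rewrite /G glue_r //; lra].
pose G := glue F1 F2 c1.
exists (Hairpin (MkHairpin false c2 F3 G)); split; first by rewrite /shape_wf /hairpin_wf /=; do 2 split => //;
  [exact: continuity_glue|rewrite /G glue_r].
move=> [x y]; rewrite /three_graphs /on_shape /on_hairpin /hp_dom /ray /between /=.
split.
  case=> [[Hr ->]|[[Hr ->]|[Hr ->]]].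
  - by split; [lra|right; rewrite /G glue_l].
  - by split; [case: Hr; lra|right; rewrite /G glue_r //; case: Hr; lra].
  - by split => //; left.
case=> Hr [->|->]; first by right; right.
case: (Rle_dec x c1) => Hx1; first by left; rewrite /G glue_l.
by right; left; split; [lra|rewrite /G glue_r //; lra].
Qed.

End ThreeGraphs.

Lemma three_graphs_swap c1 c2 d1 d3 F1 F2 F3 p :
  three_graphs c1 c2 d1 d3 F1 F2 F3 p <-> three_graphs c2 c1 d3 d1 F3 F2 F1 p.
Proof. rewrite /three_graphs /between; tauto. Qed.

Lemma three_graphs_shape c1 c2 d1 d3 F1 F2 F3 :
  continuity F1 -> continuity F2 -> continuity F3 -> F1 c1 = F2 c1 -> F2 c2 = F3 c2 ->
  exists s, shape_wf s /\ forall p, three_graphs c1 c2 d1 d3 F1 F2 F3 p <-> on_shape s p.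
Proof.
move=> H1 H2 H3 E1 E2.
have swap : (exists s, shape_wf s /\
      forall p, three_graphs c2 c1 d3 d1 F3 F2 F1 p <-> on_shape s p) ->
    exists s, shape_wf s /\ forall p, three_graphs c1 c2 d1 d3 F1 F2 F3 p <-> on_shape s p.
  by case=> s [Hs Hp]; exists s; split => // p; rewrite three_graphs_swap.
case: (Rle_dec c1 c2) => Hc; destruct d1, d3.
- exact: three_graphs_parallel_shape.
- by apply: swap; apply: three_graphs_opposite_shape.
- exact: three_graphs_opposite_shape.
- exact: three_graphs_parallel_shape.
- by apply: swap; apply: three_graphs_parallel_shape => //; lra.
- by apply: swap; apply: three_graphs_opposite_shape.
- exact: three_graphs_opposite_shape.
- by apply: swap; apply: three_graphs_parallel_shape => //; lra.
Qed.

Lemma chain_shape (Cr : region) : is_2way_3monotone_chain Cr ->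
  exists s, shape_wf s /\ forall p, Cr p <-> on_shape s p.
Proof.
case/chain_three_graphs => c1 [c2 [d1 [d3 [F1 [F2 [F3 [H1 [H2 [H3 [E1 [E2 HC]]]]]]]]]]].
have [s [Hs Hp]] := @three_graphs_shape c1 c2 d1 d3 F1 F2 F3 H1 H2 H3 E1 E2.
by exists s; split => // p; rewrite HC.
Qed.

Definition Rltb (x y : R) : bool := if Rlt_dec x y then true else false.
Definition Rleb (x y : R) : bool := if Rle_dec x y then true else false.

Lemma RltbP x y : Rltb x y = true <-> x < y.
Proof. by rewrite /Rltb; case: Rlt_dec. Qed.

Lemma Rltb_iff a b c d : (a < b <-> c < d) -> Rltb a b = Rltb c d.
Proof.
by rewrite /Rltb => H; case: Rlt_dec => h1; case: Rlt_dec => h2 //; exfalso; tauto.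
Qed.

Lemma Rleb_true x y : x <= y -> Rleb x y = true.
Proof. by rewrite /Rleb; case: Rle_dec. Qed.

Lemma Rleb_false x y : y < x -> Rleb x y = false.
Proof. by rewrite /Rleb; case: Rle_dec => // H; lra. Qed.

Lemma Rltb_transport f g lo hi : continuity f -> continuity g -> lo <= hi ->
  (forall z, lo <= z <= hi -> f z <> g z) -> Rltb (f lo) (g lo) = Rltb (f hi) (g hi).
Proof.
move=> Hf Hg Hlh H; apply: Rltb_iff; apply: no_crossing_ltE => // z.
by rewrite Rmin_left // Rmax_right //; apply: H.
Qed.

Lemma constant_across_two_cuts (P : R -> bool) x x' b a : x <= x' -> b <= a ->
  (forall z z', x <= z <= z' -> z' <= x' -> z' <= b -> P z = P z') ->
  (forall z z', x <= z <= z' -> z' <= x' -> b <= z -> z' <= a -> P z = P z') ->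
  (forall z z', x <= z <= z' -> z' <= x' -> a <= z -> P z = P z') ->
  P x = P x'.
Proof.
move=> Hx Hba H1 H2 H3.
case: (Rle_dec x' b) => Hx'b; first by apply: H1; lra.
case: (Rle_dec a x) => Hax; first by apply: H3; lra.
have Hmid : forall z, x <= z <= x' -> b <= z <= a -> P z = P (Rmin x' a).
  move=> z Hz Hzm; rewrite /Rmin; case: Rle_dec => Hx'a; apply: H2; lra.
have Hright : P (Rmin x' a) = P x'.
  by rewrite /Rmin; case: Rle_dec => Hx'a //; apply: H3; lra.
rewrite -Hright; case: (Rle_dec b x) => Hbx; first by apply: Hmid; lra.
rewrite (H1 x b); try lra.
by apply: Hmid; lra.
Qed.

Definition spanning (s : shape) : bool := if s is Hairpin _ then false else true.

(** Parity of the number of branches of [s] strictly above [p] on the vertical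
    line through [p] (hairpins are not considered). *)
Definition parity_above (s : shape) (p : point) : bool :=
  match s with
  | Graph h => Rltb p.2 (h p.1)
  | Zigzag a b g1 g2 g3 =>
      xorb (Rleb p.1 a && Rltb p.2 (g1 p.1))
        (xorb (Rleb b p.1 && Rleb p.1 a && Rltb p.2 (g2 p.1))
              (Rleb b p.1 && Rltb p.2 (g3 p.1)))
  | Hairpin _ => false
  end.

Section ZigzagParity.

Variables (a b : R) (g1 g2 g3 : R -> R).
Hypothesis wf_zigzag : shape_wf (Zigzag a b g1 g2 g3).

Lemma zigzag_parity_left z y : z <= b ->
  parity_above (Zigzag a b g1 g2 g3) (z, y) = Rltb y (g1 z).
Proof.
move: wf_zigzag => [_ [_ [_ [Hba [_ Eb]]]]] Hz /=.
rewrite Rleb_true /=; last lra.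
case: (Req_dec z b) => [->|Hzb]; last by rewrite Rleb_false /=; [case: Rltb|lra].
by rewrite (Rleb_true (Rle_refl b)) Eb /=; case: Rltb; case: Rltb.
Qed.

Lemma zigzag_parity_right z y : a <= z ->
  parity_above (Zigzag a b g1 g2 g3) (z, y) = Rltb y (g3 z).
Proof.
move: wf_zigzag => [_ [_ [_ [Hba [Ea _]]]]] Hz /=.
rewrite (@Rleb_true b z) /=; last lra.
case: (Req_dec z a) => [->|Hza]; last by rewrite Rleb_false //; lra.
by rewrite (Rleb_true (Rle_refl a)) Ea /=; case: Rltb; case: Rltb.
Qed.

Lemma zigzag_parity_middle z y : b <= z <= a ->
  parity_above (Zigzag a b g1 g2 g3) (z, y) =
  xorb (Rltb y (g1 z)) (xorb (Rltb y (g2 z)) (Rltb y (g3 z))).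
Proof. by move=> Hz /=; rewrite !Rleb_true //; lra. Qed.

End ZigzagParity.

Lemma parity_transport s f x x' : shape_wf s -> spanning s -> continuity f ->
  (forall z, Rmin x x' <= z <= Rmax x x' -> ~ on_shape s (z, f z)) ->
  parity_above s (x, f x) = parity_above s (x', f x').
Proof.
wlog Hxx : x x' / x <= x'.
  move=> Hw Hs HA Hf Hav; case: (Rle_dec x x') => Hxx; first exact: Hw.
  by symmetry; apply: Hw => //; [lra|by rewrite Rmin_comm Rmax_comm].
rewrite Rmin_left // Rmax_right //.
case: s => [h|a b g1 g2 g3|H] // Hw _ Hf Hav.
  by apply: Rltb_transport => // z Hz Heq; exact: (Hav z Hz Heq).
have Hw' := Hw; move: Hw => [H1 [H2 [H3 [Hba [Ea Eb]]]]].
have T : forall g lo hi, continuity g -> x <= lo -> lo <= hi -> hi <= x' ->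
    (forall z, lo <= z <= hi -> ~ (f z = g z)) -> Rltb (f lo) (g lo) = Rltb (f hi) (g hi).
  by move=> g lo hi Hg Hlo Hlh Hhi Hne; apply: Rltb_transport => // z /Hne.
apply: (@constant_across_two_cuts (fun z => parity_above (Zigzag a b g1 g2 g3) (z, f z)) x x' b a) => //;
  try lra; move=> z z' Hz Hz' Hr.
- have Hzb : z <= b by lra.
  rewrite (zigzag_parity_left Hw' _ Hzb) (zigzag_parity_left Hw' _ Hr).
  apply: T; [exact: H1|lra|lra|lra|] => w Hwz Heq.
  by apply: (Hav w); [lra|left; split => /=; lra].
- move=> Hr'; have Hzm : b <= z <= a by lra.
  have Hzm' : b <= z' <= a by lra.
  rewrite (zigzag_parity_middle g1 g2 g3 _ Hzm) (zigzag_parity_middle g1 g2 g3 _ Hzm').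
  have Tz : forall g, continuity g -> (forall w, z <= w <= z' -> f w <> g w) ->
      Rltb (f z) (g z) = Rltb (f z') (g z').
    by move=> g Hg; apply: T; [exact: Hg|lra|lra|lra].
  rewrite (Tz g1 H1) ?(Tz g2 H2) ?(Tz g3 H3) => [//|w Hwz Heq|w Hwz Heq|w Hwz Heq];
    apply: (Hav w); try lra.
  + by right; right; split => /=; lra.
  + by right; left; split => /=; lra.
  + by left; split => /=; lra.
- have Hz'a : a <= z' by lra.
  rewrite (zigzag_parity_right Hw' _ Hr) (zigzag_parity_right Hw' _ Hz'a).
  apply: T; [exact: H3|lra|lra|lra|] => w Hwz Heq.
  by apply: (Hav w); [lra|right; right; split => /=; lra].
Qed.

Definition shapes_disjoint (X Y : shape) : Prop := forall p, on_shape X p -> ~ on_shape Y p.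

Lemma shapes_disjoint_sym X Y : shapes_disjoint X Y -> shapes_disjoint Y X.
Proof. by move=> H p HY HX; exact: (H p HX HY). Qed.

(** [left_of x0 s]: the vertical line at [x0] meets [s] only on its leftmost
    branch, whose height there is [left_value s x0]. *)
Definition left_of (x0 : R) (s : shape) : Prop :=
  if s is Zigzag _ b _ _ _ then x0 < b else True.

Definition left_value (s : shape) : R -> R :=
  match s with Graph h => h | Zigzag _ _ g1 _ _ => g1 | Hairpin H => hp_u H end.

Lemma on_shape_left_value X x0 : shape_wf X -> spanning X -> left_of x0 X ->
  on_shape X (x0, left_value X x0).
Proof.
case: X => [h|a b g1 g2 g3|H] //= [_ [_ [_ [Hba _]]]] _ Hl.
by left; split => //; lra.
Qed.

Lemma parity_left_of Y x0 y : shape_wf Y -> spanning Y -> left_of x0 Y ->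
  parity_above Y (x0, y) = Rltb y (left_value Y x0).
Proof.
case: Y => [h|a b g1 g2 g3|H] // Hw _ Hl.
by rewrite (zigzag_parity_left Hw); [|simpl in Hl; lra].
Qed.

Lemma parity_constant_on Y X x0 : shape_wf Y -> spanning Y ->
  shape_wf X -> spanning X -> left_of x0 X -> shapes_disjoint X Y ->
  forall p, on_shape X p -> parity_above Y p = parity_above Y (x0, left_value X x0).
Proof.
move=> HwY HAY HwX HAX Hl Hd [x y].
case: X HwX HAX Hl Hd => [h|a b g1 g2 g3|H] // HwX _ Hl Hd.
  rewrite /on_shape /=; move=> ->.
  by apply: (@parity_transport Y h) => // z _ Hz; exact: (Hd (z, h z) erefl Hz).
move: HwX => [H1 [H2 [H3 [Hba [Ea Eb]]]]].
have P1 : forall z, z <= a -> parity_above Y (z, g1 z) = parity_above Y (x0, g1 x0).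
  move=> z Hz; apply: parity_transport => // w Hw Hp.
  apply: (Hd (w, g1 w)) => //=; left; split => //.
  by move: Hw; rewrite /Rmin /Rmax; destruct (Rle_dec z x0); simpl in Hl; lra.
have P2 : forall z, b <= z <= a -> parity_above Y (z, g2 z) = parity_above Y (x0, g1 x0).
  move=> z Hz; rewrite -(P1 a (Rle_refl _)) Ea; apply: parity_transport => // w Hw Hp.
  apply: (Hd (w, g2 w)) => //=; right; left; split => //.
  by move: Hw; rewrite Rmin_left ?Rmax_right; lra.
have P3 : forall z, b <= z -> parity_above Y (z, g3 z) = parity_above Y (x0, g1 x0).
  move=> z Hz; rewrite -(P2 b ltac:(lra)) Eb; apply: parity_transport => // w Hw Hp.
  apply: (Hd (w, g3 w)) => //=; right; right; split => //.
  by move: Hw; rewrite Rmin_right ?Rmax_left; lra.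
rewrite /on_shape /=.
by case=> [[Hx ->]|[[Hx ->]|[Hx ->]]]; [exact: P1|exact: P2|exact: P3].
Qed.

Definition below_at (x0 : R) (X Y : shape) : Prop :=
  shapes_disjoint X Y /\ left_value X x0 < left_value Y x0.

Section BelowAt.

Variable x0 : R.

Definition spanning_left_of (s : shape) : Prop :=
  shape_wf s /\ spanning s /\ left_of x0 s.

Lemma below_at_trans X Y Z :
  spanning_left_of X -> spanning_left_of Y -> spanning_left_of Z ->
  below_at x0 X Y -> below_at x0 Y Z -> below_at x0 X Z.
Proof.
move=> [HwX [HAX HlX]] [HwY [HAY HlY]] [HwZ [HAZ HlZ]] [HdXY HXY] [HdYZ HYZ].
split; last lra.
move=> p HX HZ.
have := @parity_constant_on Y X x0 HwY HAY HwX HAX HlX HdXY p HX.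
rewrite (@parity_constant_on Y Z x0 HwY HAY HwZ HAZ HlZ (shapes_disjoint_sym HdYZ) p HZ).
rewrite !(@parity_left_of Y x0 _ HwY HAY HlY).
have -> : Rltb (left_value X x0) (left_value Y x0) = true by apply/RltbP.
by rewrite /Rltb; case: Rlt_dec => // h; lra.
Qed.

Lemma below_at_total X Y : spanning_left_of X -> spanning_left_of Y ->
  shapes_disjoint X Y -> below_at x0 X Y \/ below_at x0 Y X.
Proof.
move=> [HwX [HAX HlX]] [HwY [HAY HlY]] Hd.
have HX := @on_shape_left_value X x0 HwX HAX HlX.
have HY := @on_shape_left_value Y x0 HwY HAY HlY.
case: (Rtotal_order (left_value X x0) (left_value Y x0)) => [H|[H|H]].
- by left.
- by exfalso; apply: (Hd _ HX); rewrite H.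
- by right; split => //; exact: shapes_disjoint_sym.
Qed.

End BelowAt.

Lemma convex_segment (J : R -> Prop) e x z : convex J -> J e -> J x ->
  Rmin e x <= z <= Rmax e x -> J z.
Proof.
move=> HJ He Hx; rewrite /Rmin /Rmax; case: Rle_dec => _ Hz.
  exact: (HJ e z x).
exact: (HJ x z e).
Qed.

Lemma no_crossing_convex (J : R -> Prop) f g e x : convex J ->
  continuity f -> continuity g -> (forall z, J z -> f z <> g z) ->
  J e -> J x -> (f e < g e <-> f x < g x).
Proof.
move=> HJ Hf Hg Hfg He Hx; apply: no_crossing_ltE => // z Hz.
exact: (Hfg z (@convex_segment J e x z HJ He Hx Hz)).
Qed.

(** At the fold point [e] the pair [uY], [vY] is a single value, so each of
    [uX], [vX] is there either below or above the whole pair; having no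
    crossings, it stays so on all of [J]. *)
Lemma fold_position (J : R -> Prop) e uX vX uY vY : convex J -> J e ->
  continuity uX -> continuity vX -> continuity uY -> continuity vY -> uY e = vY e ->
  (forall x, J x -> uX x <> uY x /\ uX x <> vY x /\ vX x <> uY x /\ vX x <> vY x) ->
  (forall x, J x -> Rmax (uX x) (vX x) < Rmin (uY x) (vY x)) \/
  (forall x, J x -> Rmax (uY x) (vY x) < Rmin (uX x) (vX x)) \/
  (forall x, J x -> Rmin (uX x) (vX x) < Rmin (uY x) (vY x) /\
                    Rmax (uY x) (vY x) < Rmax (uX x) (vX x)).
Proof.
move=> HJ He HuX HvX HuY HvY Efold Hne.
have side : forall f, continuity f -> (forall x, J x -> f x <> uY x /\ f x <> vY x) ->
    forall x, J x -> (f e < uY e -> f x < uY x /\ f x < vY x) /\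
                     (uY e < f e -> uY x < f x /\ vY x < f x).
  move=> f Hf Hf' x Hx.
  have T := fun g Hg (Hfg : forall z, J z -> f z <> g z) =>
    @no_crossing_convex J f g e x HJ Hf Hg Hfg He Hx.
  have T' := fun g Hg (Hfg : forall z, J z -> g z <> f z) =>
    @no_crossing_convex J g f e x HJ Hg Hf Hfg He Hx.
  have Hu := T uY HuY (fun z Hz => proj1 (Hf' z Hz)).
  have Hv := T vY HvY (fun z Hz => proj2 (Hf' z Hz)).
  have Hu' := T' uY HuY (fun z Hz E => proj1 (Hf' z Hz) (esym E)).
  have Hv' := T' vY HvY (fun z Hz E => proj2 (Hf' z Hz) (esym E)).
  by rewrite -Efold in Hv Hv'; tauto.
have SuX := side uX HuX (fun x Hx => let: conj a (conj b _) := Hne x Hx in conj a b).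
have SvX := side vX HvX (fun x Hx => let: conj _ (conj _ cd) := Hne x Hx in cd).
have [a1 [_ [a2 _]]] := Hne e He.
case: (Rlt_dec (uX e) (uY e)) => c1; case: (Rlt_dec (vX e) (uY e)) => c2;
  [left|right; right|right; right|right; left] => x Hx;
  have [Hu1 Hu2] := SuX x Hx; have [Hv1 Hv2] := SvX x Hx;
  rewrite /Rmin /Rmax; repeat case: Rle_dec => ?;
  (have := Hu1; have := Hu2; have := Hv1; have := Hv2); lra.
Qed.

Definition hp_lo (H : hairpin) (x : R) : R := Rmin (hp_u H x) (hp_v H x).
Definition hp_hi (H : hairpin) (x : R) : R := Rmax (hp_u H x) (hp_v H x).

Lemma hp_lo_le_hi H x : hp_lo H x <= hp_hi H x.
Proof. by rewrite /hp_lo /hp_hi; have := Rminmax (hp_u H x) (hp_v H x). Qed.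

Definition ray_le (H1 H2 : hairpin) : Prop :=
  match hp_right H1, hp_right H2 with
  | false, true => True
  | true, false => False
  | _, _ => hp_end H1 <= hp_end H2
  end.

Lemma ray_le_trans H1 H2 H3 : ray_le H1 H2 -> ray_le H2 H3 -> ray_le H1 H3.
Proof.
by rewrite /ray_le; case: (hp_right H1); case: (hp_right H2); case: (hp_right H3); lra.
Qed.

Lemma ray_le_mid H1 H2 H3 x : ray_le H1 H2 -> ray_le H2 H3 ->
  hp_dom H1 x -> hp_dom H3 x -> hp_dom H2 x.
Proof.
rewrite /ray_le /hp_dom /ray.
by case: (hp_right H1); case: (hp_right H2); case: (hp_right H3); lra.
Qed.

Lemma ray_le_total H1 H2 : ray_le H1 H2 \/ ray_le H2 H1.
Proof.
rewrite /ray_le; case: (hp_right H1); case: (hp_right H2); try tauto.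
- by case: (Rle_dec (hp_end H1) (hp_end H2)); [left|right; lra].
- by case: (Rle_dec (hp_end H1) (hp_end H2)); [left|right; lra].
Qed.

Definition hairpin_stacked (up : bool) (H1 H2 : hairpin) : Prop :=
  ray_le H1 H2 /\ forall x, hp_dom H1 x -> hp_dom H2 x ->
    if up then hp_hi H1 x < hp_lo H2 x else hp_hi H2 x < hp_lo H1 x.

Definition hairpin_encloses (H1 H2 : hairpin) : Prop :=
  forall x, hp_dom H2 x -> hp_dom H1 x /\ hp_lo H1 x < hp_lo H2 x /\ hp_hi H2 x < hp_hi H1 x.

Lemma hairpin_stacked_trans up H1 H2 H3 :
  hairpin_stacked up H1 H2 -> hairpin_stacked up H2 H3 -> hairpin_stacked up H1 H3.
Proof.
move=> [R12 S12] [R23 S23]; split; first exact: ray_le_trans R12 R23.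
move=> x Hx1 Hx3; have Hx2 := ray_le_mid R12 R23 Hx1 Hx3.
have := S12 x Hx1 Hx2; have := S23 x Hx2 Hx3; have := hp_lo_le_hi H2 x.
by case: up {S12 S23}; lra.
Qed.

Lemma hairpin_encloses_trans H1 H2 H3 :
  hairpin_encloses H1 H2 -> hairpin_encloses H2 H3 -> hairpin_encloses H1 H3.
Proof.
move=> E12 E23 x Hx3; have [Hx2 [L23 H23]] := E23 x Hx3.
by have [Hx1 [L12 H12]] := E12 x Hx2; split => //; lra.
Qed.

Definition hairpins_disjoint (H1 H2 : hairpin) : Prop :=
  forall p, on_hairpin H1 p -> ~ on_hairpin H2 p.

Lemma on_hairpin_bounds H p : on_hairpin H p -> hp_lo H p.1 <= p.2 <= hp_hi H p.1 /\
  (p.2 = hp_lo H p.1 \/ p.2 = hp_hi H p.1).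
Proof.
move=> [_ Hp]; rewrite /hp_lo /hp_hi /Rmin /Rmax.
by case: Rle_dec => ?; case: Hp => E; lra.
Qed.

Lemma hairpin_stacked_disjoint up H1 H2 :
  hairpin_stacked up H1 H2 -> hairpins_disjoint H1 H2.
Proof.
move=> [_ S] p P1 P2; have := S p.1 (proj1 P1) (proj1 P2).
have [B1 _] := on_hairpin_bounds P1; have [B2 _] := on_hairpin_bounds P2.
by case: up {S}; lra.
Qed.

Lemma hairpin_encloses_disjoint H1 H2 :
  hairpin_encloses H1 H2 -> hairpins_disjoint H1 H2.
Proof.
move=> E p P1 P2; have [_ [L H]] := E p.1 (proj1 P2).
have [_ [E1|E1]] := on_hairpin_bounds P1; have [B2 _] := on_hairpin_bounds P2; lra.
Qed.

Lemma hairpins_disjoint_sym H1 H2 : hairpins_disjoint H1 H2 -> hairpins_disjoint H2 H1.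
Proof. by move=> H p P2 P1; exact: (H p P1 P2). Qed.

Lemma hairpins_disjoint_apart H1 H2 : hairpins_disjoint H1 H2 ->
  forall x, hp_dom H1 x /\ hp_dom H2 x ->
  hp_u H1 x <> hp_u H2 x /\ hp_u H1 x <> hp_v H2 x /\
  hp_v H1 x <> hp_u H2 x /\ hp_v H1 x <> hp_v H2 x.
Proof.
move=> Hd x [D1 D2].
have Pu : on_hairpin H1 (x, hp_u H1 x) by split => //; left.
have Pv : on_hairpin H1 (x, hp_v H1 x) by split => //; right.
by do ![split|] => E; [apply: (Hd _ Pu)|apply: (Hd _ Pu)|apply: (Hd _ Pv)|apply: (Hd _ Pv)];
  split => //=; rewrite E; [left|right|left|right].
Qed.

Lemma hp_lo_hi_end H : hairpin_wf H -> hp_lo H (hp_end H) = hp_hi H (hp_end H).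
Proof. by move=> [_ [_ F]]; rewrite /hp_lo /hp_hi F /Rmin /Rmax; case: Rle_dec. Qed.

Lemma convex_hp_dom H : convex (hp_dom H).
Proof. by rewrite /hp_dom /ray; case: (hp_right H) => x y z; lra. Qed.

Lemma hairpin_fold_inside H1 H2 : hairpin_wf H1 -> hairpin_wf H2 ->
  hairpins_disjoint H1 H2 -> hp_dom H1 (hp_end H2) ->
  (forall x, hp_dom H1 x /\ hp_dom H2 x -> hp_hi H1 x < hp_lo H2 x) \/
  (forall x, hp_dom H1 x /\ hp_dom H2 x -> hp_hi H2 x < hp_lo H1 x) \/
  (forall x, hp_dom H1 x /\ hp_dom H2 x ->
     hp_lo H1 x < hp_lo H2 x /\ hp_hi H2 x < hp_hi H1 x).
Proof.
move=> [Hu1 [Hv1 _]] [Hu2 [Hv2 E2]] Hd He.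
have HJ : convex (fun x => hp_dom H1 x /\ hp_dom H2 x).
  move=> x y z [X1 X2] [Z1 Z2] Hy.
  by split; [exact: (convex_hp_dom X1 Z1)|exact: (convex_hp_dom X2 Z2)].
have Je : hp_dom H1 (hp_end H2) /\ hp_dom H2 (hp_end H2).
  by split => //; rewrite /hp_dom /ray; case: (hp_right H2); lra.
exact: fold_position HJ Je Hu1 Hv1 Hu2 Hv2 E2 (hairpins_disjoint_apart Hd).
Qed.

Definition hairpin_order (o : option bool) : hairpin -> hairpin -> Prop :=
  if o is Some up then hairpin_stacked up else hairpin_encloses.

Lemma hairpin_order_trans o H1 H2 H3 :
  hairpin_order o H1 H2 -> hairpin_order o H2 H3 -> hairpin_order o H1 H3.
Proof. by case: o => [up|]; [exact: hairpin_stacked_trans|exact: hairpin_encloses_trans]. Qed.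

Lemma hairpin_order_disjoint o H1 H2 : hairpin_order o H1 H2 -> hairpins_disjoint H1 H2.
Proof.
by case: o => [up|]; [exact: hairpin_stacked_disjoint|exact: hairpin_encloses_disjoint].
Qed.

Lemma hairpins_comparable H1 H2 : hairpin_wf H1 -> hairpin_wf H2 ->
  hairpins_disjoint H1 H2 ->
  exists o, hairpin_order o H1 H2 \/ hairpin_order o H2 H1.
Proof.
wlog Hle : H1 H2 / ray_le H1 H2.
  move=> Hw W1 W2 Hd; case: (ray_le_total H1 H2) => Hle; first exact: Hw.
  have [o Ho] := Hw H2 H1 Hle W2 W1 (hairpins_disjoint_sym Hd).
  by exists o; tauto.
move=> W1 W2 Hd.
have stack : forall up, (forall x, hp_dom H1 x /\ hp_dom H2 x ->
    if up then hp_hi H1 x < hp_lo H2 x else hp_hi H2 x < hp_lo H1 x) ->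
    exists o, hairpin_order o H1 H2 \/ hairpin_order o H2 H1.
  by move=> up S; exists (Some up); left; split => // x D1 D2; apply: S.
move: Hle; rewrite /ray_le.
case K1 : (hp_right H1); case K2 : (hp_right H2) => // Hle;
  have dom1 : forall x, hp_dom H1 x <-> ray (hp_right H1) (hp_end H1) x by [];
  have dom2 : forall x, hp_dom H2 x <-> ray (hp_right H2) (hp_end H2) x by [];
  rewrite K1 /ray in dom1; rewrite K2 /ray in dom2.
- have [S|[S|S]] := hairpin_fold_inside W1 W2 Hd (proj2 (dom1 _) Hle).
  + by apply: (stack true).
  + by apply: (stack false).
  exists None; left => x D2; have D1 : hp_dom H1 x by apply/dom1; have := proj1 (dom2 x) D2; lra.
  by split; last exact: S.
- case: (Rlt_dec (hp_end H1) (hp_end H2)) => He.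
    apply: (stack true) => x [/dom1 D1 /dom2 D2]; lra.
  have [S|[S|S]] := hairpin_fold_inside W1 W2 Hd (proj2 (dom1 (hp_end H2)) ltac:(lra)).
  + by apply: (stack true).
  + by apply: (stack false).
  exfalso; have E1 := hp_lo_hi_end W1.
  have D : hp_dom H1 (hp_end H1) /\ hp_dom H2 (hp_end H1) by split; [apply/dom1|apply/dom2]; lra.
  by have := S _ D; have := hp_lo_le_hi H2 (hp_end H1); lra.
- have [S|[S|S]] := hairpin_fold_inside W2 W1 (hairpins_disjoint_sym Hd) (proj2 (dom2 _) Hle).
  + by apply: (stack false) => x [D1 D2]; apply: S.
  + by apply: (stack true) => x [D1 D2]; apply: S.
  exists None; right => x D1; have D2 : hp_dom H2 x by apply/dom2; have := proj1 (dom1 x) D1; lra.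
  by split; last exact: S.
Qed.

Local Close Scope R_scope.

Definition decide (P : Prop) : bool := if excluded_middle_informative P then true else false.

Lemma decideP (P : Prop) : reflect P (decide P).
Proof. by rewrite /decide; case: excluded_middle_informative => H; constructor. Qed.

Lemma chromatic_number_le (I : finType) (adj : rel I) k :
  colorable [rel i j | (i != j) && adj i j] k -> chromatic_number adj <= k.
Proof. by move=> Hk; rewrite /chromatic_number; case: ex_minnP => m _; apply. Qed.

Lemma colorable_of_map (I K : finType) (adj : rel I) (f : I -> K) :
  (forall i j, adj i j -> f i != f j) -> colorable adj #|K|.
Proof.
move=> Hf; apply/existsP; exists [ffun i => enum_rank (f i)].
apply/forallP => i; apply/forallP => j; apply/implyP => /Hf Hij.
by rewrite !ffunE; apply: contra Hij => /eqP/enum_rank_inj ->.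
Qed.

Section Heights.

Variables (I : finType) (adj : rel I) (R : I -> I -> Prop).
Hypothesis adj_irrefl : forall i, ~~ adj i i.
Hypothesis adj_sym : forall i j, adj i j -> adj j i.
Hypothesis R_adj : forall i j, R i j -> adj i j.
Hypothesis R_trans : forall i j k, R i j -> R j k -> R i k.

Definition chain_to (j : I) (S : {set I}) : Prop :=
  j \in S /\ (forall x, x \in S -> x != j -> R x j) /\
  (forall x y, x \in S -> y \in S -> x != y -> R x y \/ R y x).

Definition height (j : I) : nat := \max_(S | decide (chain_to j S)) #|S|.

Lemma chain_to_clique j S : chain_to j S -> is_clique adj S.
Proof.
move=> [_ [_ Hc]]; apply/forallP => x; apply/implyP => Hx.
apply/forallP => y; apply/implyP => Hy; apply/implyP => Hxy.
by case: (Hc x y Hx Hy Hxy) => H; [exact: R_adj|apply: adj_sym; exact: R_adj].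
Qed.

Lemma chain_to1 j : chain_to j [set j].
Proof.
split; first exact: set11.
split; first by move=> x; rewrite in_set1 => /eqP ->; rewrite eqxx.
by move=> x y; rewrite !in_set1 => /eqP -> /eqP ->; rewrite eqxx.
Qed.

Lemma height_bounds j : 0 < height j <= clique_number adj.
Proof.
apply/andP; split.
  have := @leq_bigmax_cond _ (fun S => decide (chain_to j S)) (fun S => #|S|) [set j].
  by rewrite cards1; apply; apply/decideP; exact: chain_to1.
apply/bigmax_leqP => S /decideP HS; apply: leq_bigmax_cond.
exact: chain_to_clique HS.
Qed.

Lemma chain_to_extend i j S : R i j -> chain_to i S -> chain_to j (j |: S).
Proof.
move=> Rij [HiS [HSi HSc]].
have toj : forall x, x \in S -> R x j.
  move=> x Hx; case: (eqVneq x i) => [-> //|Hxi].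
  exact: R_trans (HSi x Hx Hxi) Rij.
split; first by rewrite setU11.
split; first by move=> x; rewrite in_setU1 => /orP [/eqP ->|Hx]; [rewrite eqxx|move=> _; exact: toj].
move=> x y; rewrite !in_setU1 => /orP [/eqP ->|Hx] /orP [/eqP ->|Hy].
- by rewrite eqxx.
- by move=> _; right; exact: toj.
- by move=> _; left; exact: toj.
- exact: HSc.
Qed.

Lemma height_lt i j : R i j -> height i < height j.
Proof.
move=> Rij.
have [S /decideP HS Hmax] := @arg_maxnP _ [set i] (fun S => decide (chain_to i S))
  (fun S => #|S|) (introT (decideP _) (chain_to1 i)).
have Ehi : height i = #|S|.
  apply/eqP; rewrite eqn_leq leq_bigmax_cond ?andbT; last exact/decideP.
  by apply/bigmax_leqP => T /Hmax.
have HjS : j \notin S.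
  apply/negP => Hj; have [_ [HSi _]] := HS.
  have Hij : j != i by apply: contraTneq (R_adj Rij) => ->; exact: adj_irrefl.
  by move: (adj_irrefl i); rewrite (R_adj (R_trans Rij (HSi j Hj Hij))).
have := @leq_bigmax_cond _ (fun S => decide (chain_to j S)) (fun S => #|S|) (j |: S).
by rewrite cardsU1 HjS Ehi add1n; apply; apply/decideP; exact: chain_to_extend Rij HS.
Qed.

Lemma height_colouring : exists h : I -> 'I_(clique_number adj),
  forall i j, R i j -> h i != h j.
Proof.
have hlt : forall i, (height i).-1 < clique_number adj.
  by move=> i; have := height_bounds i; lia.
exists (fun i => Ordinal (hlt i)) => i j /height_lt Hij.
by apply/eqP => /(congr1 val) /=; have := height_bounds i; lia.
Qed.

End Heights.

(** Colour [P] by [RA]-height and the rest by the tuple of [RB o]-heights. *)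
Lemma chromatic_number_chain_cover (I K : finType) (adj : rel I) (P : pred I)
    (RA : I -> I -> Prop) (RB : K -> I -> I -> Prop) :
  (forall i, ~~ adj i i) -> (forall i j, adj i j -> adj j i) ->
  (forall i j, RA i j -> adj i j) -> (forall i j k, RA i j -> RA j k -> RA i k) ->
  (forall o i j, RB o i j -> adj i j) ->
  (forall o i j k, RB o i j -> RB o j k -> RB o i k) ->
  (forall i j, adj i j -> P i -> P j -> RA i j \/ RA j i) ->
  (forall i j, adj i j -> ~~ P i -> ~~ P j -> exists o, RB o i j \/ RB o j i) ->
  chromatic_number adj <= clique_number adj + clique_number adj ^ #|K|.
Proof.
move=> irr sym RAadj RAtr RBadj RBtr coverA coverB.
have [hA HA] := height_colouring irr sym RAadj RAtr.
have [hB HB] := fin_all_exists (fun o => height_colouring irr sym (RBadj o) (RBtr o)).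
pose col i := if P i then inl (hA i) else inr [ffun o => hB o i].
apply: chromatic_number_le.
have -> : clique_number adj + clique_number adj ^ #|K| =
    #|{: 'I_(clique_number adj) + {ffun K -> 'I_(clique_number adj)}}|.
  by rewrite card_sum card_ffun card_ord.
apply: (@colorable_of_map _ _ _ col) => i j /andP [_ Hij].
rewrite /col; case Pi : (P i); case Pj : (P j) => //.
  by case: (coverA i j Hij Pi Pj) => H; [|rewrite eq_sym]; apply: HA.
have [o Ho] := coverB i j Hij (negbT Pi) (negbT Pj).
apply/negP => /eqP [] /ffunP /(_ o); rewrite !ffunE; apply/eqP.
by case: Ho => H; [|rewrite eq_sym]; apply: HB.
Qed.

Local Open Scope R_scope.

Lemma exists_lt_all (I : finType) (f : I -> R) : exists x0, forall i, x0 < f i.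
Proof.
suff [x0 Hx0] : exists x0, forall i, i \in enum I -> x0 < f i.
  by exists x0 => i; apply: Hx0; rewrite mem_enum.
elim: (enum I) => [|a s [x0 Hx0]]; first by exists 0.
exists (Rmin x0 (f a) - 1) => i; rewrite in_cons => /orP [/eqP ->|/Hx0 Hi].
  by have := Rmin_r x0 (f a); lra.
by have := Rmin_l x0 (f a); lra.
Qed.

Lemma exists_left_of_all (I : finType) (sh : I -> shape) :
  exists x0, forall i, left_of x0 (sh i).
Proof.
have [x0 Hx0] := exists_lt_all (fun i => if sh i is Zigzag _ b _ _ _ then b else 0).
by exists x0 => i; move: (Hx0 i); rewrite /left_of; case: (sh i).
Qed.

Lemma shape_nonempty s : shape_wf s -> exists p, on_shape s p.
Proof.
case: s => [h|a b g1 g2 g3|H] /= Hw.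
- by exists (0, h 0).
- by exists (a, g1 a); left; split => /=; [lra|].
- exists (hp_end H, hp_u H (hp_end H)); split => /=; last by left.
  by rewrite /hp_dom /ray; case: (hp_right H); lra.
Qed.

Definition shape_hairpin_order (o : option bool) (X Y : shape) : Prop :=
  if (X, Y) is (Hairpin H1, Hairpin H2) then hairpin_order o H1 H2 else False.

Local Close Scope R_scope.

Lemma shapes_chromatic_number (I : finType) (adj : rel I) (sh : I -> shape) :
  (forall i, shape_wf (sh i)) ->
  (forall i j, adj i j <-> shapes_disjoint (sh i) (sh j)) ->
  chromatic_number adj <= clique_number adj + clique_number adj ^ 3.
Proof.
move=> Hwf adjE; have [x0 Hx0] := exists_left_of_all sh.
have irr : forall i, ~~ adj i i.
  move=> i; apply/negP => /adjE Hd; have [p Hp] := shape_nonempty (Hwf i).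
  exact: (Hd p Hp Hp).
have sym : forall i j, adj i j -> adj j i.
  by move=> i j /adjE /shapes_disjoint_sym /adjE.
have Hspan : forall i, spanning (sh i) -> spanning_left_of x0 (sh i).
  by move=> i Hs; split; [exact: Hwf|split; [exact: Hs|exact: Hx0]].
have -> : 3 = #|{: option bool}| by rewrite card_option card_bool.
apply: (@chromatic_number_chain_cover _ _ _ (fun i => spanning (sh i))
  (fun i j => [/\ spanning (sh i), spanning (sh j) & below_at x0 (sh i) (sh j)])
  (fun o i j => shape_hairpin_order o (sh i) (sh j))) => //.
- by move=> i j [_ _ [Hd _]]; apply/adjE.
- move=> i j k [Si Sj Bij] [_ Sk Bjk]; split => //.
  exact: below_at_trans (Hspan i Si) (Hspan j Sj) (Hspan k Sk) Bij Bjk.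
- move=> o i j; rewrite /shape_hairpin_order => H; apply/adjE; move: H.
  by case: (sh i) => // H1; case: (sh j) => // H2; apply: hairpin_order_disjoint.
- move=> o i j k; rewrite /shape_hairpin_order.
  by case: (sh i) => // H1; case: (sh j) => // H2; case: (sh k) => // H3;
    apply: hairpin_order_trans.
- move=> i j /adjE Hd Si Sj.
  by case: (below_at_total (Hspan i Si) (Hspan j Sj) Hd) => H; [left|right].
move=> i j /adjE; rewrite /shape_hairpin_order; have := Hwf i; have := Hwf j.
case: (sh i) => // H1; case: (sh j) => // H2 W2 W1 Hd _ _.
exact: hairpins_comparable W1 W2 Hd.
Qed.

Lemma disj_adj_shapesE (I : finType) (C : I -> region) (sh : I -> shape) :
  (forall i, shape_wf (sh i)) -> (forall i p, C i p <-> on_shape (sh i) p) ->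
  forall i j, disj_adj C i j <-> shapes_disjoint (sh i) (sh j).
Proof.
move=> Hwf HC i j; rewrite /disj_adj; split.
  case/andP => _; case: excluded_middle_informative => // Hd _ p Hi Hj.
  by apply: (Hd p); split; apply/HC.
move=> Hd; have Hij : i != j.
  apply/eqP => E; subst j; have [p Hp] := shape_nonempty (Hwf i); exact: (Hd p Hp Hp).
rewrite Hij /=; case: excluded_middle_informative => // Hn; exfalso; apply: Hn.
by move=> p [H1 H2]; apply: (Hd p); apply/HC.
Qed.

Theorem theorem7 (I : finType) (C : I -> region) :
  (forall i, is_2way_3monotone_chain (C i)) ->
  chromatic_number (disj_adj C) <=
    (clique_number (disj_adj C)) ^ 3 + clique_number (disj_adj C).
Proof.
move=> HC; have [sh Hsh] := fin_all_exists (fun i => chain_shape (HC i)).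
have Hwf i : shape_wf (sh i) := proj1 (Hsh i).
rewrite addnC; apply: (shapes_chromatic_number Hwf).
exact: disj_adj_shapesE Hwf (fun i => proj2 (Hsh i)).
Qed.
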